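(* Let $(\alpha_n)_{n\ge1}$ be a sequence with $0<\alpha_n<1$ for all $n$ and $\sum_n\alpha_n<\infty$, and let $E\sim(\alpha_n)$ be the associated Cantor set. Then $E$ is a nowhere dense closed set which has strong uniform density type (SUDT).
   Context: Construction of $E\sim(\alpha_n)$: start with $\mathcal{I}_0=\{[0,1]\}$. Given the collection $\mathcal{I}_{n-1}$ of $2^{n-1}$ disjoint closed intervals of equal length, obtain $\mathcal{I}_n$ by removing from each $I\in\mathcal{I}_{n-1}$ the open interval centered at the midpoint of $I$ of length $\alpha_n|I|$, leaving $2^n$ closed intervals each of length $d_n$, where $d_0=1$ and $2d_n=(1-\alpha_n)d_{n-1}$. Let $E_n=\bigcup_{I\in\mathcal{I}_n}I$ and $E=\bigcap_{n}E_n$. $|A|$ denotes Lebesgue measure. For measurable $E$ and $\gamma,\delta>0$, $E^{\gamma,\delta}=\{x\in\mathbb{R} : \forall r\in(0,\delta],\ \max\{|(x-r,x)\cap E|/r,\ |(x,x+r)\cap E|/r\}\ge\gamma\}$. $E$ has SUDT if there exist sequences $\gamma_n\nearrow1$ and $\delta_n\searrow0$ such that $E\subseteq\bigcup_{k=1}^\infty\bigcap_{n=k}^\infty E^{\gamma_n,\delta_n}$. *)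

From HB Require Import structures.
From mathcomp Require Import all_boot all_order all_algebra.
From mathcomp Require Import all_classical all_reals all_analysis.
Set Implicit Arguments. Unset Strict Implicit. Unset Printing Implicit Defensive.
Import Order.TTheory GRing.Theory Num.Theory.
Import numFieldNormedType.Exports.
Local Open Scope classical_set_scope.
Local Open Scope ring_scope.

(* Lengths d_n of the intervals of generation n:  d_0 = 1, 2 d_n = (1 - alpha_n) d_{n-1}.
   The sequence alpha is indexed from 1 (alpha 0 is never used). *)
Fixpoint cantor_len (R : realType) (alpha : nat -> R) (n : nat) : R :=
  match n with
  | 0 => 1
  | m.+1 => (1 - alpha m.+1) * cantor_len alpha m / 2
  end.

(* Left endpoint of the k-th interval (k < 2^n, numbered left to right) of generation n.
   The interval k of generation n+1 is the left (k even) or right (k odd) piece left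
   when the open middle part of length alpha_{n+1} d_n is removed from interval k/2
   of generation n. *)
Fixpoint cantor_left (R : realType) (alpha : nat -> R) (n : nat) (k : nat) : R :=
  match n with
  | 0 => 0
  | m.+1 => cantor_left alpha m k./2 +
            (if odd k then cantor_len alpha m - cantor_len alpha m.+1 else 0)
  end.

Definition cantor_level (R : realType) (alpha : nat -> R) (n : nat) : set R :=
  \bigcup_(k in [set k : nat | (k < 2 ^ n)%N])
    `[cantor_left alpha n k, cantor_left alpha n k + cantor_len alpha n]%classic.

Definition cantor_set (R : realType) (alpha : nat -> R) : set R :=
  \bigcap_(n in [set: nat]) cantor_level alpha n.

Definition nowhere_dense (R : realType) (A : set R) : Prop :=
  interior (closure A) = set0.

Definition density_set (R : realType) (E : set R) (gamma delta : R) : set R :=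
  [set x : R | forall r : R, 0 < r -> r <= delta ->
     let left_int : set R := `]x - r, x[%classic in
     let right_int : set R := `]x, x + r[%classic in
     (gamma%:E <=
      Order.max
        (lebesgue_measure (left_int `&` E) * (r^-1)%:E)
        (lebesgue_measure (right_int `&` E) * (r^-1)%:E))%E].

Definition SUDT (R : realType) (E : set R) : Prop :=
  measurable E /\
  exists (gamma delta : nat -> R),
    [/\ (forall n, 0 < gamma n), {homo gamma : n m / (n <= m)%N >-> n <= m}
        & gamma @ \oo --> (1 : R)] /\
    [/\ (forall n, 0 < delta n), {homo delta : n m / (n <= m)%N >-> m <= n}
        & delta @ \oo --> (0 : R)] /\
    E `<=` \bigcup_(k in [set: nat])
             \bigcap_(n in [set n : nat | (k <= n)%N]) density_set E (gamma n) (delta n).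

From HB Require Import structures.
From mathcomp Require Import all_boot all_order all_algebra.
From mathcomp Require Import all_classical all_reals all_analysis.
From mathcomp Require Import ring lra zify.
Import Order.TTheory GRing.Theory Num.Theory.
Import numFieldNormedType.Exports.
Local Open Scope classical_set_scope.
Local Open Scope ring_scope.
Set Implicit Arguments. Unset Strict Implicit. Unset Printing Implicit Defensive.

(* Write d_n for the length of the intervals of generation n and T_n for the
   tail sum of the alpha_j, j > n.  E is closed, being an intersection of
   finite unions of closed intervals, and has empty interior because d_n -> 0
   while the midpoint of every interval of generation n is removed at
   generation n+1.  Removing the gaps of all later generations costs a
   subinterval of an interval of generation n at most T_n d_n of its length
   (induction on the generation, then a decreasing limit of measures).  A point
   x of E lies in an interval J of generation m+1 whose parent I has length
   d_m <= 16 r when d_(m+2) < r <= d_(m+1) and T_m is small; on the side of x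
   facing the gap of I, the interval of radius r stays inside I, so its density
   in E is at least 1 - 16 T_m, which tends to 1. *)

Lemma measure_bigcap_ge d (T : measurableType d) (R : realType)
    (mu : {measure set T -> \bar R}) (F : (set T)^nat) (c : \bar R) :
  (forall n, measurable (F n)) -> nonincreasing_seq F -> (mu (F 0%N) < +oo)%E ->
  (forall n, c <= mu (F n))%E -> (c <= mu (\bigcap_n F n))%E.
Proof.
move=> mF F_decr F0_fin c_le.
have mI : measurable (\bigcap_n F n) by apply: bigcap_measurable => //; exists 0%N.
have mu_cvg := nonincreasing_cvg_mu F0_fin mF mI F_decr.
rewrite -(cvg_lim _ mu_cvg) //; apply: lime_ge; first exact: cvgP mu_cvg.
exact: nearW.
Qed.

Lemma lebesgue_measure_itvoo_ge (R : realType) (u v : R) :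
  ((v - u)%:E <= lebesgue_measure `]u, v[%classic)%E.
Proof.
rewrite lebesgue_measure_itv /= lte_fin; case: ltP => [_|vu]; first by rewrite -EFinD.
by rewrite lee_fin subr_le0.
Qed.

Lemma lebesgue_measure_itvoo_split (R : realType) (A : set R) (u c c' v : R) :
  measurable A -> c <= c' -> c <= v -> u <= c' ->
  (lebesgue_measure (`]u, c[ `&` A) + lebesgue_measure (`]c', v[ `&` A)
    <= lebesgue_measure (`]u, v[ `&` A))%E.
Proof.
move=> mA cc' cv uc'.
have mI (a b : R) : measurable (`]a, b[ `&` A) by apply: measurableI.
have disj : (`]u, c[ `&` A) `&` (`]c', v[ `&` A) = set0.
  by rewrite -subset0 => x [[+ _] [+ _]]; rewrite !set_itvoo => /andP[_ ?] /andP[? _]; lra.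
rewrite -(measureU lebesgue_measure (mI _ _) (mI _ _) disj).
apply: le_measure; rewrite ?inE; [apply: measurableU; exact: mI | exact: mI |].
by move=> x [] [+ Ax]; rewrite !set_itvoo => /andP[? ?]; split => //; apply/andP; split; lra.
Qed.

Lemma cvg0_bracket (R : realType) (u : R^nat) n r :
  u @ \oo --> 0 -> 0 < r -> r <= u n -> exists2 m, (n <= m)%N & u m.+1 < r <= u m.
Proof.
move=> u_cvg0 r_gt0 r_le; have [N _ u_lt] := cvgr_lt 0 u_cvg0 r r_gt0.
have ex_lt : exists j, (n <= j)%N && (u j < r).
  by exists (maxn N n); rewrite u_lt /=; lia.
case: (ex_minnP ex_lt) => j /andP[nj uj_lt] j_min.
have j_gt : (n < j)%N.
  by rewrite ltn_neqAle nj andbT; apply: contraTneq uj_lt => <-; rewrite -leNgt.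
exists j.-1; first lia.
rewrite prednK ?uj_lt /=; last lia.
rewrite leNgt; apply/negP => lt_r.
have nj' : (n <= j.-1)%N by lia.
by have := j_min j.-1; rewrite lt_r nj' => /(_ isT); lia.
Qed.

(* [series u n.+1] is the sum of the u_j, j <= n, so this is the sum of the u_j, j > n. *)
Definition series_tail (R : realType) (u : R^nat) n := limn (series u) - series u n.+1.

Lemma series_tailS (R : realType) (u : R^nat) n :
  u n.+1 + series_tail u n.+1 = series_tail u n.
Proof. by rewrite /series_tail [series u n.+2]seriesSr; lra. Qed.

Section series_tail_cvg.
Variables (R : realType) (u : R^nat).
Hypothesis u_cvg : cvgn (series u).

Let series_shift_cvg : (fun n => series u n.+1) @ \oo --> limn (series u).
Proof. by rewrite (cvg_shiftS (series u)). Qed.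

Lemma series_tail_cvg0 : series_tail u @ \oo --> 0.
Proof.
rewrite -[X in _ --> X](subrr (limn (series u))).
exact: cvgB (cvg_cst _) series_shift_cvg.
Qed.

Lemma series_tail_ge0 : (forall n, 0 <= u n.+1) -> forall n, 0 <= series_tail u n.
Proof.
move=> u_ge0 n; rewrite subr_ge0 -(cvg_lim _ series_shift_cvg) //.
apply: (@nondecreasing_cvgn_le _ (fun m => series u m.+1)); last exact: cvgP series_shift_cvg.
by apply/nondecreasing_seqP => m; rewrite [series u m.+2]seriesSr lerDl.
Qed.

End series_tail_cvg.

Section cantor_set.
Variables (R : realType) (alpha : nat -> R).
Hypothesis alpha_itv : forall n, (0 < n)%N -> 0 < alpha n < 1.

Local Notation d := (cantor_len alpha).

Lemma cantor_len_gt0 n : 0 < d n.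
Proof.
elim: n => [|n IH] /=; first exact: ltr01.
have /andP[_ alpha_lt1] := alpha_itv (ltn0Sn n).
by rewrite divr_gt0 // mulr_gt0 // subr_gt0.
Qed.

Lemma cantor_len_double n : 2 * d n.+1 = (1 - alpha n.+1) * d n.
Proof. by rewrite /=; field. Qed.

Lemma cantor_len_double_lt n : 2 * d n.+1 < d n.
Proof.
rewrite cantor_len_double mulrBl mul1r ltrBlDr ltrDl.
have /andP[alpha_gt0 _] := alpha_itv (ltn0Sn n).
by rewrite mulr_gt0 // cantor_len_gt0.
Qed.

Lemma cantor_len_nonincreasing : nonincreasing_seq d.
Proof.
apply/nonincreasing_seqP => n.
by have := cantor_len_double_lt n; have := cantor_len_gt0 n.+1; lra.
Qed.

Lemma cantor_len_cvg0 : d @ \oo --> 0.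
Proof.
have d_le_expr n : d n <= 2^-1 ^+ n.
  elim: n => [|n IH]; first by rewrite expr0.
  by have := cantor_len_double_lt n; rewrite exprS; lra.
apply: (@squeeze_cvgr _ _ _ _ (cst 0) (fun n => 2^-1 ^+ n)); last first.
- by apply: cvg_expr; rewrite ger0_norm // invf_lt1 // ltr1n.
- exact: cvg_cst.
- by apply: nearW => n; rewrite d_le_expr ltW ?cantor_len_gt0.
Qed.

Lemma cantor_lenS_cvg0 : (fun n => d n.+1) @ \oo --> 0.
Proof. by rewrite (cvg_shiftS d); exact: cantor_len_cvg0. Qed.

Lemma cantor_len_le_16 m : alpha m.+1 <= 1/2 -> alpha m.+2 <= 1/2 -> d m <= 16 * d m.+2.
Proof.
move=> alpha1 alpha2; have d1 := cantor_len_double m; have d2 := cantor_len_double m.+1.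
have d0_gt0 := cantor_len_gt0 m; have d1_gt0 := cantor_len_gt0 m.+1.
have : 0 <= (1/2 - alpha m.+1) * d m by apply: mulr_ge0; lra.
have : 0 <= (1/2 - alpha m.+2) * d m.+1 by apply: mulr_ge0; lra.
lra.
Qed.

Lemma cantor_leftS n k : cantor_left alpha n.+1 k =
  cantor_left alpha n k./2 + (if odd k then d n - d n.+1 else 0).
Proof. by []. Qed.

Lemma cantor_left_double n k : cantor_left alpha n.+1 k.*2 = cantor_left alpha n k.
Proof. by rewrite cantor_leftS odd_double doubleK addr0. Qed.

Lemma cantor_left_doubleS n k :
  cantor_left alpha n.+1 k.*2.+1 = cantor_left alpha n k + (d n - d n.+1).
Proof. by rewrite cantor_leftS /= odd_double uphalf_double. Qed.

Lemma cantor_child_sub n k :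
  cantor_left alpha n k./2 <= cantor_left alpha n.+1 k /\
  cantor_left alpha n.+1 k + d n.+1 <= cantor_left alpha n k./2 + d n.
Proof.
have := cantor_len_double_lt n; have := cantor_len_gt0 n.+1.
by rewrite cantor_leftS; case: (odd k); split; lra.
Qed.

Lemma cantor_left_lt n k k' : (k < k')%N -> (k' < 2 ^ n)%N ->
  cantor_left alpha n k + d n < cantor_left alpha n k'.
Proof.
elim: n k k' => [|n IH] k k' kk' k'_lt; first by move: k'_lt; rewrite expn0; lia.
have [parent_le _] := cantor_child_sub n k'; have [_ le_parent] := cantor_child_sub n k.
case: (ltngtP k./2 k'./2) => [lt_parent | gt_parent | same].
- by have := IH _ _ lt_parent (ltac:(move: k'_lt; rewrite expnS; lia)); lra.
- lia.
- have := cantor_len_double_lt n; have := cantor_len_gt0 n.+1.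
  have [ok ok'] : ~~ odd k /\ odd k'.
    by move: (odd_double_half k) (odd_double_half k'); case: (odd k); case: (odd k') => /=; lia.
  by rewrite !cantor_leftS same (negbTE ok) ok' => *; lra.
Qed.

Lemma cantor_levelS_sub n : cantor_level alpha n.+1 `<=` cantor_level alpha n.
Proof.
move=> x [k k_lt]; rewrite set_itvcc => /andP[x_ge x_le]; exists k./2.
  by move: k_lt; rewrite /= expnS; lia.
have [? ?] := cantor_child_sub n k.
by rewrite set_itvcc; apply/andP; split; lra.
Qed.

Lemma cantor_level_nonincreasing : nonincreasing_seq (cantor_level alpha).
Proof. by apply/nonincreasing_seqP => n; rewrite subsetEset; exact: cantor_levelS_sub. Qed.

Lemma measurable_cantor_level n : measurable (cantor_level alpha n).
Proof. by apply: bigcup_measurable => k _; exact: measurable_itv. Qed.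

Lemma measurable_cantor_set : measurable (cantor_set alpha).
Proof.
by apply: bigcap_measurable => [|n _]; [exists 0%N | exact: measurable_cantor_level].
Qed.

Lemma closed_cantor_set : closed (cantor_set alpha).
Proof.
apply: closed_bigI => n _; apply: closed_bigcup => [|k _]; first exact: finite_II.
exact: interval_closed.
Qed.

Lemma cantor_mid_notin n k : (k < 2 ^ n)%N ->
  ~ cantor_level alpha n.+1 (cantor_left alpha n k + d n / 2).
Proof.
move=> k_lt [k' k'_lt]; rewrite set_itvcc => /andP[mid_ge mid_le].
have := cantor_len_double_lt n; have := cantor_len_gt0 n.+1.
have [? ?] := cantor_child_sub n k'.
have parent_lt : (k'./2 < 2 ^ n)%N by move: k'_lt; rewrite /= expnS; lia.
case: (ltngtP k'./2 k) => [lt_k | gt_k | same].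
- by have := cantor_left_lt lt_k k_lt; lra.
- by have := cantor_left_lt gt_k parent_lt; lra.
- by move: mid_ge mid_le; rewrite cantor_leftS same; case: (odd k') => *; lra.
Qed.

Lemma interior_cantor_set : interior (cantor_set alpha) = set0.
Proof.
rewrite -subset0 => x /nbhs_ballP[e e_gt0 ball_sub].
have [m _ dm_lt] := cvgr_lt 0 cantor_len_cvg0 e e_gt0.
have [k k_lt] := ball_sub x (ballxx _ e_gt0) m I.
rewrite set_itvcc => /andP[x_ge x_le].
apply: (cantor_mid_notin k_lt); apply: (ball_sub _ _ m.+1 I).
have := dm_lt m (leqnn m); have := cantor_len_gt0 m.
by rewrite ball_itv /= in_itv /= => *; apply/andP; split; lra.
Qed.

Lemma nowhere_dense_cantor_set : nowhere_dense (cantor_set alpha).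
Proof.
by rewrite /nowhere_dense -(closure_id _).1 ?interior_cantor_set //; exact: closed_cantor_set.
Qed.

Section tail_majorant.
Variable T : nat -> R.
Hypothesis T_ge0 : forall n, 0 <= T n.
Hypothesis T_geS : forall n, alpha n.+1 + T n.+1 <= T n.

Lemma T_nonincreasing : nonincreasing_seq T.
Proof.
apply/nonincreasing_seqP => n; have /andP[alpha_gt0 _] := alpha_itv (ltn0Sn n).
by have := T_geS n; lra.
Qed.

Definition nearly_full (A : set R) n := forall k, (k < 2 ^ n)%N ->
  forall u v, cantor_left alpha n k <= u -> v <= cantor_left alpha n k + d n ->
  ((v - u - T n * d n)%:E <= lebesgue_measure (`]u, v[ `&` A))%E.

Lemma nearly_full_level n : nearly_full (cantor_level alpha n) n.
Proof.
move=> k k_lt u v u_ge v_le.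
have -> : `]u, v[ `&` cantor_level alpha n = `]u, v[%classic.
  apply/setIidPl => x; rewrite set_itvoo => /andP[? ?]; exists k => //.
  by rewrite set_itvcc; apply/andP; split; lra.
apply: le_trans (lebesgue_measure_itvoo_ge u v); rewrite lee_fin gerBl.
by rewrite mulr_ge0 // ltW ?cantor_len_gt0.
Qed.

Lemma nearly_full_parent A n : measurable A -> nearly_full A n.+1 -> nearly_full A n.
Proof.
move=> mA fullA k k_lt u v; set a := cantor_left alpha n k => u_ge v_le.
have d_lt := cantor_len_double_lt n; have dS_gt0 := cantor_len_gt0 n.+1.
have d_double := cantor_len_double n; have d_gt0 := cantor_len_gt0 n.
have /andP[alpha_gt0 _] := alpha_itv (ltn0Sn n).
have TS_ge0 := T_ge0 n.+1; have TS_le := T_geS n.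
have T_mass : T n.+1 * d n.+1 <= T n * d n by apply: ler_pM => //; lra.
have fullL := fullA k.*2 (ltac:(rewrite expnS; lia)).
have fullR := fullA k.*2.+1 (ltac:(rewrite expnS; lia)).
rewrite cantor_left_double -/a in fullL; rewrite cantor_left_doubleS -/a in fullR.
case: (leP v (a + d n.+1)) => [v_left | v_right].
  by apply: le_trans (fullL u v u_ge v_left); rewrite lee_fin; lra.
case: (leP (a + (d n - d n.+1)) u) => [u_right | u_left].
  by apply: le_trans (fullR u v u_right _); rewrite ?lee_fin; lra.
apply: le_trans (lebesgue_measure_itvoo_split (c := a + d n.+1)
  (c' := a + (d n - d n.+1)) mA _ _ _); [| lra | lra | lra].
apply: le_trans (leeD (fullL u _ u_ge (lexx _)) (fullR _ v (lexx _) _)); last lra.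
(* The gap costs alpha_(n+1) d_n, the two children at most 2 T_(n+1) d_(n+1) <= T_(n+1) d_n. *)
rewrite -EFinD lee_fin.
have : 0 <= T n.+1 * (alpha n.+1 * d n) by rewrite mulr_ge0 // mulr_ge0 // ltW.
have : (alpha n.+1 + T n.+1) * d n <= T n * d n by rewrite ler_pM2r.
have : T n.+1 * (2 * d n.+1) = T n.+1 * ((1 - alpha n.+1) * d n) by rewrite d_double.
lra.
Qed.

Lemma nearly_full_level_add p n : nearly_full (cantor_level alpha (n + p)) n.
Proof.
elim: p n => [|p IH] n; first by rewrite addn0; exact: nearly_full_level.
by rewrite addnS -addSn; apply: nearly_full_parent (IH n.+1); exact: measurable_cantor_level.
Qed.

Lemma nearly_full_cantor_set n : nearly_full (cantor_set alpha) n.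
Proof.
move=> k k_lt u v u_ge v_le.
have -> : `]u, v[ `&` cantor_set alpha =
    \bigcap_p (`]u, v[ `&` cantor_level alpha (n + p)).
  rewrite bigcapIr; last by exists 0%N.
  congr (_ `&` _); rewrite bigcap_addn eqEsubset; split => x Ex j _; first exact: Ex.
  have := cantor_level_nonincreasing (leq_addl n j); rewrite subsetEset; apply.
  exact/Ex/leq_addr.
apply: measure_bigcap_ge => [p | | | p].
- by apply: measurableI => //; exact: measurable_cantor_level.
- apply/nonincreasing_seqP => p; rewrite subsetEset; apply: setIS.
  by rewrite addnS; exact: cantor_levelS_sub.
- apply: (@le_lt_trans _ _ (lebesgue_measure `]u, v[%classic)).
    apply: le_measure; rewrite ?inE //.
    by apply: measurableI => //; exact: measurable_cantor_level.
  by rewrite lebesgue_measure_itv; case: ifP; rewrite ?ltry // -EFinB ltry.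
- exact: nearly_full_level_add p n _ k_lt _ _ u_ge v_le.
Qed.

Lemma cantor_density_ge x m r : cantor_set alpha x -> T m <= 1/32 ->
  d m.+2 < r -> r <= d m.+1 ->
  ((1 - 16 * T m)%:E <= Order.max
     (lebesgue_measure (`](x - r)%R, x[ `&` cantor_set alpha) * (r^-1)%:E)
     (lebesgue_measure (`]x, (x + r)%R[ `&` cantor_set alpha) * (r^-1)%:E))%E.
Proof.
move=> Ex Tm dm_lt r_le; have [k k_lt] := Ex m.+1 I.
rewrite set_itvcc cantor_leftS => /andP[x_ge x_le].
have parent_lt : (k./2 < 2 ^ m)%N by move: k_lt; rewrite /= expnS; lia.
have full := @nearly_full_cantor_set m _ parent_lt.
have r_gt0 : 0 < r by have := cantor_len_gt0 m.+2; lra.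
have d_le : d m <= 16 * r.
  have /andP[alpha1_gt0 _] := alpha_itv (ltn0Sn m).
  have /andP[alpha2_gt0 _] := alpha_itv (ltn0Sn m.+1).
  have := T_geS m; have := T_geS m.+1; have := T_ge0 m.+2 => *.
  by have := @cantor_len_le_16 m; lra.
have scale t : ((r - T m * d m)%:E <= t)%E -> ((1 - 16 * T m)%:E <= t * (r^-1)%:E)%E.
  have rV_ge0 : (0 <= (r^-1)%:E)%E by rewrite lee_fin invr_ge0 ltW.
  move=> rt; apply: le_trans (lee_wpmul2r rV_ge0 rt).
  rewrite -EFinM lee_fin ler_pdivlMr //.
  have : T m * d m <= T m * (16 * r) by apply: ler_wpM2l.
  lra.
have := cantor_len_double_lt m; have := cantor_len_gt0 m.+1.
rewrite le_max; case: (odd k) in x_ge x_le => *; apply/orP.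
- by left; apply/scale/(le_trans _ (full (x - r) x _ _)); rewrite ?lee_fin; lra.
- by right; apply/scale/(le_trans _ (full x (x + r) _ _)); rewrite ?lee_fin; lra.
Qed.

Lemma cantor_set_sub_density_set n : T n <= 1/32 ->
  cantor_set alpha `<=` density_set (cantor_set alpha) (1 - 16 * T n) (d n.+1).
Proof.
move=> Tn x Ex r r_gt0 r_le /=.
have [m nm /andP[dm_lt r_lem]] := cvg0_bracket cantor_lenS_cvg0 r_gt0 r_le.
have := T_nonincreasing nm => Tm.
by apply: le_trans (cantor_density_ge Ex _ dm_lt r_lem); rewrite ?lee_fin; lra.
Qed.

Lemma cantor_set_SUDT : T @ \oo --> 0 -> SUDT (cantor_set alpha).
Proof.
move=> T_cvg0; split; first exact: measurable_cantor_set.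
have [n0 _ T_small] := cvgr_le 0 T_cvg0 (1/32) ltac:(lra).
have T_shift : (fun N => T (N + n0)) @ \oo --> 0 by rewrite (cvg_shiftn n0 T).
exists (fun N => 1 - 16 * T (N + n0)), (fun N => d (N + n0).+1).
split; [split | split; [split |]].
- by move=> N; have := T_small _ (leq_addl N n0); lra.
- move=> i j ij; have := T_nonincreasing (_ : (i + n0 <= j + n0)%N).
  by rewrite leq_add2r => /(_ ij); lra.
- rewrite -[X in _ --> X]subr0 -[X in _ --> _ - X](mulr0 16).
  by apply: cvgB; [exact: cvg_cst | exact: cvgM (cvg_cst _) T_shift].
- by move=> N; exact: cantor_len_gt0.
- by move=> i j ij; apply: cantor_len_nonincreasing; rewrite ltnS leq_add2r.
- by have := cantor_lenS_cvg0; rewrite -(cvg_shiftn n0).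
- move=> x Ex; exists 0%N => // N _.
  exact: cantor_set_sub_density_set (T_small _ (leq_addl N n0)) _ Ex.
Qed.

End tail_majorant.

End cantor_set.

Theorem theorem3p2 (R : realType) (alpha : nat -> R) :
  (forall n : nat, (0 < n)%N -> 0 < alpha n < 1) ->
  cvgn (series alpha) ->
  [/\ nowhere_dense (cantor_set alpha), closed (cantor_set alpha)
    & SUDT (cantor_set alpha)].
Proof.
move=> alpha_itv alpha_summable.
split; [exact: nowhere_dense_cantor_set | exact: closed_cantor_set |].
have alphaS_ge0 n : 0 <= alpha n.+1 by have /andP[/ltW] := alpha_itv _ (ltn0Sn n).
apply: (cantor_set_SUDT alpha_itv (series_tail_ge0 alpha_summable alphaS_ge0)).
- by move=> n; rewrite series_tailS.
- exact: series_tail_cvg0.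
Qed.
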